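(* Let $\Gamma=(G,\sigma)$ be a signed graph with vertex measure $\mu$, edge weight $w$ and potential $\kappa$, and let $\lambda_k^{(p)}$ be the $k$-th variational eigenvalue of its $p$-Laplacian. Let $\eta_k^{(p)}$ be the $k$-th variational eigenvalue of the $p$-Laplacian of $(G,\sigma)$ with the same $w$ and $\mu$ but with potential $\kappa'\equiv 0$. Then for every $p\ge 1$ and $1\le k\le n$, $$\eta_k^{(p)}-\mathcal C\le\lambda_k^{(p)}\le\eta_k^{(p)}+\mathcal C,\qquad \mathcal C:=\max_{1\le i\le n}\left|\frac{\kappa_i}{\mu_i}\right|.$$
   Context: $G=(V,E)$ is a finite undirected graph without self-loops, $V=\{1,\dots,n\}$. A signed graph $\Gamma=(G,\sigma)$ has signature $\sigma:E\to\{\pm1\}$, $\sigma_{ij}=\sigma(\{i,j\})$, edge weight $w:E\to(0,\infty)$, vertex measure $\mu:V\to(0,\infty)$, potential $\kappa:V\to\mathbb R$. For $p\ge1$ and nonzero $f:V\to\mathbb R$, $\mathcal R_p^\sigma(f)=\frac{\sum_{\{i,j\}\in E}w_{ij}|f(i)-\sigma_{ij}f(j)|^p+\sum_i\kappa_i|f(i)|^p}{\sum_i\mu_i|f(i)|^p}$; $\mathcal S_p=\{f:\sum_i\mu_i|f(i)|^p=1\}$. For a closed symmetric set $B\subset\mathbb R^n\setminus\{0\}$, the Krasnoselskii genus $\gamma(B)$ is the least $k$ such that an odd continuous map $B\to\mathbb R^k\setminus\{0\}$ exists. $\mathcal F_k(\mathcal S_p)$ = closed symmetric $B\subset\mathcal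 S_p$ with $\gamma(B)\ge k$. The $k$-th variational eigenvalue is $\lambda_k^{(p)}=\min_{B\in\mathcal F_k(\mathcal S_p)}\max_{f\in B}\mathcal R_p^\sigma(f)$. *)

From HB Require Import structures.
From mathcomp Require Import all_boot all_order all_algebra.
From mathcomp Require Import all_classical all_reals all_analysis.
Set Implicit Arguments. Unset Strict Implicit. Unset Printing Implicit Defensive.
Import Order.TTheory GRing.Theory Num.Theory.
Import numFieldNormedType.Exports.
Local Open Scope classical_set_scope.
Local Open Scope ring_scope.

Section SignedGraph.
Variables (R : realType) (n : nat).

(* Vertices are 'I_n (i.e. {1,...,n} shifted); the simple graph G is given by a
   symmetric irreflexive adjacency relation adj; each edge {i,j} is counted once
   via i < j.  sigma, w are functions on pairs, only relevant on edges. *)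
Definition rayleigh_num (p : R) (adj : rel 'I_n) (sigma w : 'I_n -> 'I_n -> R)
  (kappa : 'I_n -> R) (f : 'rV[R]_n) : R :=
  \sum_(i : 'I_n) \sum_(j : 'I_n | (i < j)%N && adj i j)
      w i j * `|f ord0 i - sigma i j * f ord0 j| `^ p
  + \sum_(i : 'I_n) kappa i * `|f ord0 i| `^ p.

Definition rayleigh_den (p : R) (mu : 'I_n -> R) (f : 'rV[R]_n) : R :=
  \sum_(i : 'I_n) mu i * `|f ord0 i| `^ p.

Definition rayleigh (p : R) adj sigma w kappa mu (f : 'rV[R]_n) : R :=
  rayleigh_num p adj sigma w kappa f / rayleigh_den p mu f.

Definition unit_sphere (p : R) (mu : 'I_n -> R) : set 'rV[R]_n :=
  [set f | rayleigh_den p mu f = 1].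

Definition closed_symmetric (B : set 'rV[R]_n) : Prop :=
  closed B /\ ~ B 0 /\ (forall f, B f -> B (- f)).

Definition odd_map_into (B : set 'rV[R]_n) (j : nat) : Prop :=
  exists g : 'rV[R]_n -> 'rV[R]_j,
    {within B, continuous g} /\
    (forall f, B f -> g (- f) = - g f) /\
    (forall f, B f -> g f != 0).

(* gamma(B) >= k, where gamma(B) is the least j with odd_map_into B j
   (gamma(B) = +oo if no such j): equivalently no j < k admits such a map. *)
Definition genus_ge (B : set 'rV[R]_n) (k : nat) : Prop :=
  forall j : nat, (j < k)%N -> ~ odd_map_into B j.

Definition Fk (p : R) (mu : 'I_n -> R) (k : nat) : set (set 'rV[R]_n) :=
  [set B | closed_symmetric B /\ B `<=` unit_sphere p mu /\ genus_ge B k].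

(* lambda_k^(p) = min_{B in F_k} max_{f in B} R_p(f), taken as inf/sup in \bar R *)
Definition var_eigenvalue (p : R) adj sigma w kappa mu (k : nat) : \bar R :=
  ereal_inf [set ereal_sup [set (rayleigh p adj sigma w kappa mu f)%:E | f in B]
            | B in Fk p mu k].

End SignedGraph.

(* On the unit sphere the denominator of the Rayleigh quotient is 1, so adding the
   potential changes the quotient by [sum_i kappa_i |f_i|^p], whose absolute value is
   at most [max_i |kappa_i / mu_i| * sum_i mu_i |f_i|^p = C].  A uniform shift by at
   most [C] of the objective survives both the sup over each [B] and the inf over
   [F_k]. *)
From HB Require Import structures.
From mathcomp Require Import all_boot all_order all_algebra.
From mathcomp Require Import all_classical all_reals all_analysis.
From mathcomp Require Import lra.
Import Order.TTheory GRing.Theory Num.Theory.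
Import numFieldNormedType.Exports.
Local Open Scope classical_set_scope.
Local Open Scope ring_scope.

Section ExtendedShift.
Variables (R : realType) (T : Type) (C : R).

Lemma ereal_sup_image_leD (S : set T) (a b : T -> \bar R) :
  (forall x, S x -> (a x <= b x + C%:E)%E) ->
  (ereal_sup (a @` S) <= ereal_sup (b @` S) + C%:E)%E.
Proof.
move=> le_ab; apply: ge_ereal_sup => _ [x Sx <-].
apply: le_trans (le_ab x Sx) _; apply: leeD2r.
by apply: ereal_sup_ubound; exists x.
Qed.

Lemma ereal_inf_image_leD (S : set T) (a b : T -> \bar R) :
  (forall x, S x -> (a x <= b x + C%:E)%E) ->
  (ereal_inf (a @` S) <= ereal_inf (b @` S) + C%:E)%E.
Proof.
move=> le_ab; rewrite -leeBlDr //; apply: le_ereal_inf_tmp => _ [x Sx <-].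
rewrite leeBlDr //; apply: le_trans (le_ab x Sx).
by apply: ereal_inf_lbound; exists x.
Qed.

End ExtendedShift.

Section PotentialPerturbation.
Variables (R : realType) (n : nat) (p : R) (adj : rel 'I_n).
Variables (sigma w : 'I_n -> 'I_n -> R) (mu kappa : 'I_n -> R).
Hypothesis mu_pos : forall i, 0 < mu i.

Let C := \big[Order.max/0]_(i : 'I_n) `|kappa i / mu i|.

Lemma potential_energy_le_max_ratio (f : 'rV[R]_n) :
  unit_sphere p mu f -> `|\sum_(i : 'I_n) kappa i * `|f ord0 i| `^ p| <= C.
Proof.
rewrite /unit_sphere /= => den1.
rewrite -[C]mulr1 -den1 /rayleigh_den mulr_sumr.
apply: le_trans (ler_norm_sum _ _ _) _; apply: ler_sum => i _.
rewrite normrM (ger0_norm (powR_ge0 _ _)) mulrA ler_wpM2r ?powR_ge0 //.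
have -> : `|kappa i| = `|kappa i / mu i| * mu i.
  by rewrite normrM normfV (gtr0_norm (mu_pos i)) mulfVK // gt_eqF.
by rewrite ler_wpM2r ?(ltW (mu_pos i)) //; apply: le_bigmax.
Qed.

Lemma rayleigh_potential_on_sphere (f : 'rV[R]_n) :
  unit_sphere p mu f ->
  rayleigh p adj sigma w kappa mu f =
    rayleigh p adj sigma w (fun=> 0) mu f + \sum_(i : 'I_n) kappa i * `|f ord0 i| `^ p.
Proof.
rewrite /unit_sphere /= => den1.
rewrite /rayleigh den1 !divr1 /rayleigh_num.
by rewrite [X in _ = _ + X + _]big1 ?addr0 // => i _; rewrite mul0r.
Qed.

End PotentialPerturbation.

Lemma var_eigenvalue_leD (R : realType) (n : nat) (p : R) (adj : rel 'I_n)
    (sigma w : 'I_n -> 'I_n -> R) (mu kappa1 kappa2 : 'I_n -> R) (C : R) (k : nat) :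
  (forall f, unit_sphere p mu f ->
     rayleigh p adj sigma w kappa1 mu f <= rayleigh p adj sigma w kappa2 mu f + C) ->
  (var_eigenvalue p adj sigma w kappa1 mu k <=
     var_eigenvalue p adj sigma w kappa2 mu k + C%:E)%E.
Proof.
move=> le_rayleigh; apply: ereal_inf_image_leD => B [_ [B_sphere _]].
apply: ereal_sup_image_leD => f Bf; rewrite lee_fin.
exact/le_rayleigh/B_sphere.
Qed.

Theorem proposition4p2 (R : realType) (n : nat) (adj : rel 'I_n)
  (sigma w : 'I_n -> 'I_n -> R) (mu kappa : 'I_n -> R)
  (adj_sym : forall i j, adj i j = adj j i)
  (adj_irr : forall i, ~~ adj i i)
  (sigma_sym : forall i j, adj i j -> sigma i j = sigma j i)
  (sigma_pm1 : forall i j, adj i j -> sigma i j = 1 \/ sigma i j = -1)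
  (w_sym : forall i j, adj i j -> w i j = w j i)
  (w_pos : forall i j, adj i j -> 0 < w i j)
  (mu_pos : forall i, 0 < mu i)
  (p : R) (hp : 1 <= p) (k : nat) (hk1 : (1 <= k)%N) (hkn : (k <= n)%N) :
  let C := \big[Order.max/0]_(i : 'I_n) `|kappa i / mu i| in
  let lambda := var_eigenvalue p adj sigma w kappa mu k in
  let eta := var_eigenvalue p adj sigma w (fun _ => 0) mu k in
  ((eta - C%:E <= lambda)%E /\ (lambda <= eta + C%:E)%E).
Proof.
move=> C lambda eta.
have shift_le f : unit_sphere p mu f ->
    - C <= rayleigh p adj sigma w kappa mu f - rayleigh p adj sigma w (fun=> 0) mu f <= C.
  move=> f_sphere; rewrite -ler_norml rayleigh_potential_on_sphere // addrC addKr.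
  exact: potential_energy_le_max_ratio.
split; [rewrite leeBlDr //|]; apply: var_eigenvalue_leD => f /shift_le /andP[].
- by move=> lo _; lra.
- by move=> _ hi; lra.
Qed.
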